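(* Let $1\le p<\infty$ and let $\nu$ be a modulus of variation with $\nu(k)\uparrow\infty$ and $\nu(k)/k^{1/p}$ nonincreasing with limit $0$. Let $f$ be a continuous $2\pi$-periodic function. Then $f\in V_p[\nu]$ if and only if the sequence $\{F_n\}$ of Fejér means of $f$ is bounded in $V_p[\nu]$, i.e. $\sup_n\|F_n\|_{p,\nu}<\infty$.
   Context: A modulus of variation is a nondecreasing concave sequence of positive numbers. The Fejér kernel is $K_n(t)=\frac{2}{n+1}\Big(\frac{\sin\frac12(n+1)t}{2\sin\frac12t}\Big)^2$ and the Fejér mean is $F_n(x)=\frac1\pi\int_{-\pi}^{\pi}f(x+t)K_n(t)\,dt$. For a $2\pi$-periodic $g$, $\upsilon_p(n,g)=\sup(\sum_{j=1}^n|g(I_j)|^p)^{1/p}$ over $n$ nonoverlapping subintervals $I_j$ of a period interval $[a,b]=[a,a+2\pi]$, with $g(I)=g(\sup I)-g(\inf I)$; $\|g\|_{p,\nu}=\sup_n\upsilon_p(n,g)/\nu(n)+\sup_{x\in[a,b]}|g(x)|$, and $V_p[\nu]$ is the set of $g$ with $\|g\|_{p,\nu}<\infty$. *)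

From Stdlib Require Import Reals Lra.
From Coquelicot Require Import Coquelicot.
Open Scope R_scope.

(* x^y for x >= 0 and y > 0, with the convention 0^y = 0. *)
Definition powr (x y : R) : R :=
  if Req_EM_T x 0 then 0 else Rpower x y.

Fixpoint psum (F : nat -> R) (n : nat) : R :=
  match n with O => 0 | S m => psum F m + F m end.

(* A modulus of variation: a positive, nondecreasing, concave sequence
   nu(1), nu(2), ... (indices k >= 1; nu 0 is irrelevant). *)
Definition modulus_of_variation (nu : nat -> R) : Prop :=
  (forall k, (1 <= k)%nat -> 0 < nu k) /\
  (forall k, (1 <= k)%nat -> nu k <= nu (S k)) /\
  (forall k, (1 <= k)%nat -> nu (S (S k)) - nu (S k) <= nu (S k) - nu k).

Definition periodic2pi (f : R -> R) : Prop := forall x, f (x + 2 * PI) = f x.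

(* Fejer kernel, extended by continuity ((n+1)/2) where sin(t/2) = 0. *)
Definition fejer_kernel (n : nat) (t : R) : R :=
  if Req_EM_T (sin (t / 2)) 0 then (INR n + 1) / 2
  else 2 / (INR n + 1) * (sin ((INR n + 1) * t / 2) / (2 * sin (t / 2))) ^ 2.

Definition fejer_mean (f : R -> R) (n : nat) (x : R) : R :=
  / PI * RInt (fun t => f (x + t) * fejer_kernel n t) (- PI) PI.

Definition nonoverlapping_family (a : R) (n : nat) (s t : nat -> R) : Prop :=
  (forall j, (j < n)%nat -> a <= s j <= t j /\ t j <= a + 2 * PI) /\
  (forall i j, (i < n)%nat -> (j < n)%nat -> i <> j -> t i <= s j \/ t j <= s i).

Definition pvar_sum (p : R) (g : R -> R) (n : nat) (s t : nat -> R) : R :=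
  powr (psum (fun j => powr (Rabs (g (t j) - g (s j))) p) n) (/ p).

(* Vp_bounded_by p nu a g C : both sup_n v_p(n,g)/nu(n) <= C and
   sup_{x in [a,a+2pi]} |g x| <= C; hence ||g||_{p,nu} <= 2C, and
   ||g||_{p,nu} <= C implies Vp_bounded_by ... C. *)
Definition Vp_bounded_by (p : R) (nu : nat -> R) (a : R) (g : R -> R) (C : R) : Prop :=
  (forall n s t, (1 <= n)%nat -> nonoverlapping_family a n s t ->
     pvar_sum p g n s t <= C * nu n) /\
  (forall x, a <= x <= a + 2 * PI -> Rabs (g x) <= C).

Definition in_Vp (p : R) (nu : nat -> R) (a : R) (g : R -> R) : Prop :=
  exists C, Vp_bounded_by p nu a g C.

Definition bounded_in_Vp (p : R) (nu : nat -> R) (a : R) (G : nat -> R -> R) : Prop :=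
  exists C, forall n, Vp_bounded_by p nu a (G n) C.

(* Each Fejer mean is an average of translates of f against the probability density
   K_n / PI on [-PI, PI].  By Jensen's inequality for |.|^p, the p-variation sum of F_n over
   a family of intervals is at most that of the worst translate of f; a translated family
   splits at a + 2 PI into two families in [a, a + 2 PI] (periodicity), so F_n obeys the
   bounds defining V_p[nu] with constant 4C whenever f obeys them with constant C.
   Conversely F_n -> f pointwise (Fejer's theorem), and these bounds pass to pointwise
   limits. *)

From Stdlib Require Import Reals Lra Lia.
From Coquelicot Require Import Coquelicot.
Open Scope R_scope.

Lemma powr_ge0 x y : 0 <= powr x y.
Proof.
  unfold powr. destruct (Req_EM_T x 0); [lra|]. left; apply exp_pos.
Qed.

Lemma powr_0 y : powr 0 y = 0.
Proof. unfold powr. destruct (Req_EM_T 0 0); lra. Qed.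

Lemma powr_Rpower x y : 0 < x -> powr x y = Rpower x y.
Proof. intros Hx. unfold powr. destruct (Req_EM_T x 0); [lra|reflexivity]. Qed.

Lemma powr_le x y e : 0 <= x <= y -> 0 <= e -> powr x e <= powr y e.
Proof.
  intros Hxy He. destruct (Req_dec x 0) as [->|Hx].
  - rewrite powr_0; apply powr_ge0.
  - rewrite !powr_Rpower by lra. apply Rle_Rpower_l; lra.
Qed.

Lemma powr_mult x y e : 0 <= x -> 0 <= y -> powr (x * y) e = powr x e * powr y e.
Proof.
  intros Hx Hy.
  destruct (Req_dec x 0) as [->|Hx']; [rewrite Rmult_0_l, !powr_0; ring|].
  destruct (Req_dec y 0) as [->|Hy']; [rewrite Rmult_0_r, !powr_0; ring|].
  rewrite !powr_Rpower by nra. rewrite Rpower_mult_distr; lra.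
Qed.

Lemma powr_powr x e e' : 0 <= x -> e * e' = 1 -> powr (powr x e) e' = x.
Proof.
  intros Hx Hee. destruct (Req_dec x 0) as [->|Hx']; [rewrite !powr_0; reflexivity|].
  rewrite (powr_Rpower x), powr_Rpower by (try apply exp_pos; lra).
  rewrite Rpower_mult, Hee. apply Rpower_1; lra.
Qed.

Lemma powr_inv_le_iff x y p : 0 <= x -> 0 <= y -> 0 < p ->
  powr x (/ p) <= y <-> x <= powr y p.
Proof.
  intros Hx Hy Hp. assert (Hp' : 0 < / p) by (apply Rinv_0_lt_compat; lra). split; intros H.
  - rewrite <- (powr_powr x (/ p) p) by (try field; lra).
    apply powr_le; [split; [apply powr_ge0|]|]; lra.
  - rewrite <- (powr_powr y p (/ p)) by (try field; lra).
    apply powr_le; [split|]; lra.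
Qed.

Lemma two_le_powr_two p : 1 <= p -> 2 <= powr 2 p.
Proof.
  intros Hp. rewrite powr_Rpower by lra. rewrite <- (Rpower_1 2) at 1 by lra.
  apply Rle_Rpower; lra.
Qed.

Lemma powr_abs_add_le x y p : 0 <= p ->
  powr (Rabs (x + y)) p <= powr 2 p * (powr (Rabs x) p + powr (Rabs y) p).
Proof.
  intros Hp.
  assert (Hmax : forall u v, Rabs u <= Rabs v -> powr (Rabs (u + v)) p <= powr 2 p * powr (Rabs v) p).
  { intros u v Huv. rewrite <- powr_mult by (try apply Rabs_pos; lra).
    apply powr_le; [split; [apply Rabs_pos|]|lra].
    pose proof (Rabs_triang u v). lra. }
  pose proof (powr_ge0 (Rabs x) p). pose proof (powr_ge0 (Rabs y) p). pose proof (powr_ge0 2 p).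
  destruct (Rle_dec (Rabs x) (Rabs y)) as [Hxy|Hxy].
  - pose proof (Hmax x y Hxy). nra.
  - rewrite Rplus_comm. pose proof (Hmax y x ltac:(lra)). nra.
Qed.

Lemma powr_two_mul_le p X : 1 <= p -> 0 <= X ->
  powr 2 p * (powr X p + powr X p) <= powr (4 * X) p.
Proof.
  intros Hp HX.
  replace (4 * X) with (2 * (2 * X)) by ring.
  rewrite !powr_mult by lra.
  pose proof (two_le_powr_two p Hp). pose proof (powr_ge0 X p).
  assert (2 * powr X p <= powr 2 p * powr X p) by nra. nra.
Qed.

Lemma Rpower_tangent_le p m y : 1 <= p -> 0 < m -> 0 < y ->
  Rpower m p + p * Rpower m (p - 1) * (y - m) <= Rpower y p.
Proof.
  intros Hp Hm Hy.
  assert (Hmvt : forall u v, 0 < u < v -> exists c, u < c < v /\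
    Rpower v p - Rpower u p = p * Rpower c (p - 1) * (v - u)).
  { intros u v Huv.
    destruct (MVT_cor2 (fun x => Rpower x p) (fun x => p * Rpower x (p - 1)) u v)
      as [c [Hc Hcuv]]; [lra| |].
    - intros c Hc. apply derivable_pt_lim_power. lra.
    - exists c. split; [lra|exact Hc]. }
  destruct (Rtotal_order y m) as [Hlt|[->|Hgt]].
  - destruct (Hmvt y m) as [c [Hc E]]; [lra|].
    assert (Rpower c (p - 1) <= Rpower m (p - 1)) by (apply Rle_Rpower_l; lra).
    assert (0 <= p * (m - y)) by nra. nra.
  - lra.
  - destruct (Hmvt m y) as [c [Hc E]]; [lra|].
    assert (Rpower m (p - 1) <= Rpower c (p - 1)) by (apply Rle_Rpower_l; lra).
    assert (0 <= p * (y - m)) by nra. nra.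
Qed.

Lemma powr_abs_subgradient_pos p m : 1 <= p -> 0 < m ->
  exists c, forall y, powr (Rabs m) p + c * (y - m) <= powr (Rabs y) p.
Proof.
  intros Hp Hm. exists (p * Rpower m (p - 1)). intros y.
  rewrite (Rabs_pos_eq m), powr_Rpower by lra.
  destruct (Rle_lt_dec y 0) as [Hy|Hy].
  - assert (Hmp : Rpower m (p - 1) * m = Rpower m p).
    { rewrite <- (Rpower_1 m) at 2 by lra. rewrite <- Rpower_plus. f_equal; ring. }
    assert (0 < Rpower m (p - 1)) by apply exp_pos.
    assert (0 < Rpower m p) by apply exp_pos.
    assert (p * Rpower m (p - 1) * y <= 0).
    { apply Rmult_le_0_l; [|exact Hy]. nra. }
    pose proof (powr_ge0 (Rabs y) p). nra.
  - rewrite Rabs_pos_eq, powr_Rpower by lra. apply Rpower_tangent_le; lra.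
Qed.

Lemma powr_abs_subgradient p m : 1 <= p ->
  exists c, forall y, powr (Rabs m) p + c * (y - m) <= powr (Rabs y) p.
Proof.
  intros Hp. destruct (Rtotal_order m 0) as [Hm|[->|Hm]].
  - destruct (powr_abs_subgradient_pos p (- m) Hp) as [c Hc]; [lra|].
    exists (- c). intros y. specialize (Hc (- y)). rewrite !Rabs_Ropp in Hc. lra.
  - exists 0. intros y. rewrite Rabs_R0, powr_0. pose proof (powr_ge0 (Rabs y) p). lra.
  - exact (powr_abs_subgradient_pos p m Hp Hm).
Qed.

Lemma continuous_powr_abs p y : 0 < p -> continuous (fun y => powr (Rabs y) p) y.
Proof.
  intros Hp. destruct (Req_dec y 0) as [->|Hy].
  - apply continuity_pt_filterlim. intros eps Heps.
    assert (Hd : 0 < Rpower eps (/ p)) by apply exp_pos.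
    exists (Rpower eps (/ p)). split; [exact Hd|].
    intros z [_ Hz]. simpl in *. unfold R_dist in *.
    rewrite Rminus_0_r in Hz. rewrite Rabs_R0, powr_0, Rminus_0_r.
    rewrite Rabs_pos_eq by apply powr_ge0.
    destruct (Req_dec z 0) as [->|Hz0]; [rewrite Rabs_R0, powr_0; exact Heps|].
    assert (Hz' : 0 < Rabs z) by (apply Rabs_pos_lt; exact Hz0).
    rewrite powr_Rpower by exact Hz'.
    replace eps with (Rpower (Rpower eps (/ p)) p)
      by (rewrite Rpower_mult, Rinv_l, Rpower_1; lra).
    apply Rlt_Rpower_l; lra.
  - assert (Hay : 0 < Rabs y) by (apply Rabs_pos_lt; exact Hy).
    apply (continuous_ext_loc _ (fun z => exp (p * ln (Rabs z)))).
    + exists (mkposreal _ Hay). intros z Hz.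
      rewrite powr_Rpower; [reflexivity|].
      apply Rabs_pos_lt. intros ->. apply (Rlt_irrefl (Rabs y)).
      unfold ball in Hz; simpl in Hz; unfold AbsRing_ball, abs, minus, plus, opp in Hz; simpl in Hz.
      rewrite Rplus_0_l, Rabs_Ropp in Hz. exact Hz.
    + apply (@ex_derive_continuous R_AbsRing R_NormedModule). auto_derive. lra.
Qed.

Lemma psum_S F n : psum F (S n) = psum F n + F n.
Proof. reflexivity. Qed.

Lemma psum_ext F G n : (forall j, (j < n)%nat -> F j = G j) -> psum F n = psum G n.
Proof.
  induction n as [|n IH]; intros H; simpl; [reflexivity|].
  rewrite IH by (intros; apply H; lia). rewrite H by lia. reflexivity.
Qed.

Lemma psum_le F G n : (forall j, (j < n)%nat -> F j <= G j) -> psum F n <= psum G n.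
Proof.
  induction n as [|n IH]; intros H; simpl; [lra|].
  assert (F n <= G n) by (apply H; lia).
  assert (psum F n <= psum G n) by (apply IH; intros; apply H; lia). lra.
Qed.

Lemma psum_const c n : psum (fun _ => c) n = INR n * c.
Proof. induction n as [|n IH]; [simpl; ring|]. rewrite psum_S, IH, S_INR. ring. Qed.

Lemma psum_ge0 F n : (forall j, (j < n)%nat -> 0 <= F j) -> 0 <= psum F n.
Proof.
  intros H. replace 0 with (psum (fun _ => 0) n) by (rewrite psum_const; ring).
  apply psum_le. exact H.
Qed.

Lemma psum_plus F G n : psum (fun j => F j + G j) n = psum F n + psum G n.
Proof. induction n as [|n IH]; simpl; [ring|]. rewrite IH. ring. Qed.

Lemma psum_scal c F n : psum (fun j => c * F j) n = c * psum F n.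
Proof. induction n as [|n IH]; simpl; [ring|]. rewrite IH. ring. Qed.

Lemma continuous_psum (F : nat -> R -> R) n t : (forall j, continuous (F j) t) ->
  continuous (fun t => psum (fun j => F j t) n) t.
Proof.
  intros H. induction n as [|n IH]; simpl.
  - apply continuous_const.
  - apply (continuous_plus (fun t => psum (fun j => F j t) n) (F n)); auto.
Qed.

Lemma is_RInt_psum (F : nat -> R -> R) (I : nat -> R) n a b :
  (forall j, is_RInt (F j) a b (I j)) ->
  is_RInt (fun t => psum (fun j => F j t) n) a b (psum I n).
Proof.
  intros H. induction n as [|n IH]; simpl.
  - pose proof (@is_RInt_const R_NormedModule a b 0) as H0.
    unfold scal in H0; simpl in H0; unfold mult in H0; simpl in H0.
    rewrite Rmult_0_r in H0. exact H0.
  - apply (is_RInt_plus (fun t => psum (fun j => F j t) n) (F n)); auto.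
Qed.

Lemma is_lim_seq_psum (u : nat -> nat -> R) (l : nat -> R) n :
  (forall j, is_lim_seq (fun m => u m j) (l j)) ->
  is_lim_seq (fun m => psum (u m) n) (psum l n).
Proof.
  intros H. induction n as [|n IH]; simpl.
  - apply is_lim_seq_const.
  - apply (is_lim_seq_plus' (fun m => psum (u m) n) (fun m => u m n)); auto.
Qed.

Lemma continuous_translate (f : R -> R) x t : (forall y, continuous f y) ->
  continuous (fun t => f (x + t)) t.
Proof.
  intros Hf. apply (continuous_comp (fun t => x + t) f); [|apply Hf].
  apply (@ex_derive_continuous R_AbsRing R_NormedModule). auto_derive. exact I.
Qed.

Lemma periodic2pi_sub f x : periodic2pi f -> f (x - 2 * PI) = f x.
Proof. intros Hper. rewrite <- (Hper (x - 2 * PI)). f_equal; ring. Qed.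

Lemma periodic2pi_abs_le f a C : periodic2pi f ->
  (forall x, a <= x <= a + 2 * PI -> Rabs (f x) <= C) -> forall y, Rabs (f y) <= C.
Proof.
  intros Hper HC y. pose proof PI_RGT_0 as HPI.
  assert (Hind : forall n, forall y, a - 2 * PI * INR n <= y <= a + 2 * PI * (INR n + 1) ->
    Rabs (f y) <= C).
  { induction n as [|n IH]; intros z Hz; [apply HC; simpl in Hz; lra|].
    rewrite S_INR in Hz. assert (0 <= PI * INR n) by (pose proof (pos_INR n); nra).
    destruct (Rle_lt_dec z (a + 2 * PI * (INR n + 1))) as [Hzr|Hzr];
      [destruct (Rle_lt_dec (a - 2 * PI * INR n) z) as [Hzl|Hzl]|].
    - apply IH; lra.
    - rewrite <- Hper. apply IH; lra.
    - rewrite <- (periodic2pi_sub f z Hper). apply IH; lra. }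
  destruct (INR_unbounded (Rabs (y - a) / (2 * PI))) as [n Hn].
  apply (Hind n).
  assert (Rabs (y - a) < 2 * PI * INR n).
  { apply (Rmult_lt_compat_l (2 * PI)) in Hn; [|lra].
    unfold Rdiv in Hn. rewrite <- Rmult_assoc, Rinv_r_simpl_m in Hn by lra. lra. }
  split_Rabs; lra.
Qed.

Definition dirichlet_kernel (k : nat) (t : R) : R :=
  / 2 + psum (fun j => cos (INR (S j) * t)) k.

Lemma sin_half_mul_dirichlet_kernel k t :
  2 * sin (t / 2) * dirichlet_kernel k t = sin ((2 * INR k + 1) * (t / 2)).
Proof.
  unfold dirichlet_kernel. induction k as [|k IH].
  - simpl. replace ((2 * 0 + 1) * (t / 2)) with (t / 2) by ring. field.
  - rewrite psum_S, <- Rplus_assoc, Rmult_plus_distr_l, IH.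
    replace ((2 * INR (S k) + 1) * (t / 2)) with (INR (S k) * t + t / 2) by (rewrite S_INR; field).
    replace ((2 * INR k + 1) * (t / 2)) with (INR (S k) * t - t / 2) by (rewrite S_INR; field).
    rewrite sin_plus, sin_minus. ring.
Qed.

Lemma sin_mul_psum_sin_odd n u :
  2 * sin u * psum (fun k => sin ((2 * INR k + 1) * u)) n = 1 - cos (2 * INR n * u).
Proof.
  induction n as [|n IH].
  - simpl. replace (2 * 0 * u) with 0 by ring. rewrite cos_0. ring.
  - rewrite psum_S, Rmult_plus_distr_l, IH.
    replace (2 * INR (S n) * u) with ((2 * INR n + 1) * u + u) by (rewrite S_INR; ring).
    replace (2 * INR n * u) with ((2 * INR n + 1) * u - u) by ring.
    rewrite cos_plus, cos_minus. ring.
Qed.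

Lemma cos_INR_mul_period t j : cos t = 1 -> sin t = 0 -> cos (INR j * t) = 1 /\ sin (INR j * t) = 0.
Proof.
  intros Hc Hs. induction j as [|j [IHc IHs]].
  - simpl. rewrite Rmult_0_l, cos_0, sin_0. split; reflexivity.
  - replace (INR (S j) * t) with (INR j * t + t) by (rewrite S_INR; ring).
    rewrite cos_plus, sin_plus, IHc, IHs, Hc, Hs. split; ring.
Qed.

Lemma sin_sq_half_mul_psum_dirichlet_kernel n t :
  4 * sin (t / 2) ^ 2 * psum (fun k => dirichlet_kernel k t) (S n) = 2 * sin ((INR n + 1) * t / 2) ^ 2.
Proof.
  replace (4 * sin (t / 2) ^ 2 * psum (fun k => dirichlet_kernel k t) (S n))
    with (2 * sin (t / 2) * psum (fun k => 2 * sin (t / 2) * dirichlet_kernel k t) (S n))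
    by (rewrite psum_scal; ring).
  rewrite (psum_ext _ (fun k => sin ((2 * INR k + 1) * (t / 2))))
    by (intros; apply sin_half_mul_dirichlet_kernel).
  rewrite sin_mul_psum_sin_odd.
  replace (2 * INR (S n) * (t / 2)) with (2 * ((INR n + 1) * t / 2)) by (rewrite S_INR; field).
  rewrite cos_2a_sin. ring.
Qed.

(* The closed form of [fejer_kernel] has removable singularities; this form yields its
   continuity and its integral. *)
Lemma fejer_kernel_avg n t :
  fejer_kernel n t = psum (fun k => dirichlet_kernel k t) (S n) / (INR n + 1).
Proof.
  unfold fejer_kernel. pose proof (pos_INR n) as Hn.
  destruct (Req_EM_T (sin (t / 2)) 0) as [Hs0|Hs0].
  - assert (Hc : cos t = 1).
    { replace t with (2 * (t / 2)) by field. rewrite cos_2a_sin, Hs0. ring. }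
    assert (Hs : sin t = 0).
    { replace t with (2 * (t / 2)) by field. rewrite sin_2a, Hs0. ring. }
    rewrite (psum_ext _ (fun k => / 2 + INR k)).
    + assert (Hsum : forall m, psum (fun k => / 2 + INR k) m = INR m ^ 2 / 2).
      { induction m as [|m IH]; [simpl; field|]. rewrite psum_S, IH, S_INR. field. }
      rewrite Hsum, S_INR. field. lra.
    + intros k _. unfold dirichlet_kernel. f_equal.
      rewrite (psum_ext _ (fun _ => 1)), psum_const; [ring|].
      intros j _. apply cos_INR_mul_period; assumption.
  - assert (Hs2 : 0 < sin (t / 2) ^ 2) by (apply pow2_gt_0; exact Hs0).
    assert (Epsum : psum (fun k => dirichlet_kernel k t) (S n)
                    = 2 * sin ((INR n + 1) * t / 2) ^ 2 / (4 * sin (t / 2) ^ 2)).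
    { apply (Rmult_eq_reg_l (4 * sin (t / 2) ^ 2)); [|lra].
      rewrite sin_sq_half_mul_psum_dirichlet_kernel. field. lra. }
    rewrite Epsum. field. split; lra.
Qed.

Lemma continuous_fejer_kernel n t : continuous (fejer_kernel n) t.
Proof.
  apply (continuous_ext (fun t => psum (fun k => dirichlet_kernel k t) (S n) / (INR n + 1))).
  { intros; symmetry; apply fejer_kernel_avg. }
  apply (continuous_mult (fun t => psum (fun k => dirichlet_kernel k t) (S n))
                         (fun _ => / (INR n + 1))); [|apply continuous_const].
  apply continuous_psum. intros k. unfold dirichlet_kernel.
  apply (continuous_plus (fun _ => / 2) (fun t => psum (fun j => cos (INR (S j) * t)) k));
    [apply continuous_const|].
  apply continuous_psum. intros j.
  apply (@ex_derive_continuous R_AbsRing R_NormedModule). auto_derive. exact I.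
Qed.

Lemma is_RInt_cos_mul j : is_RInt (fun t => cos (INR (S j) * t)) (- PI) PI 0.
Proof.
  set (c := INR (S j)). assert (Hc : c <> 0) by (apply not_0_INR; lia).
  assert (Hs : sin (c * PI) = 0).
  { apply sin_eq_0_1. exists (Z.of_nat (S j)). rewrite <- INR_IZR_INZ. reflexivity. }
  replace 0 with (minus (sin (c * PI) / c) (sin (c * - PI) / c)).
  - apply (is_RInt_derive (fun t => sin (c * t) / c)).
    + intros x _. auto_derive; [exact I|]. field. exact Hc.
    + intros x _. apply (@ex_derive_continuous R_AbsRing R_NormedModule). auto_derive. exact I.
  - unfold minus, plus, opp; simpl. replace (c * - PI) with (- (c * PI)) by ring.
    rewrite sin_neg, Hs. field. exact Hc.
Qed.

Lemma is_RInt_dirichlet_kernel k : is_RInt (dirichlet_kernel k) (- PI) PI PI.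
Proof.
  unfold dirichlet_kernel.
  replace PI with (plus (scal (PI - - PI) (/ 2)) (psum (fun _ => 0) k)) at 3
    by (rewrite psum_const; unfold plus, scal; simpl; unfold mult; simpl; field).
  apply (is_RInt_plus (fun _ => / 2) (fun t => psum (fun j => cos (INR (S j) * t)) k)).
  - apply (@is_RInt_const R_NormedModule).
  - apply is_RInt_psum. intros j. apply is_RInt_cos_mul.
Qed.

Lemma is_RInt_fejer_kernel n : is_RInt (fejer_kernel n) (- PI) PI PI.
Proof.
  pose proof (pos_INR n) as Hn.
  apply (is_RInt_ext (fun t => scal (/ (INR n + 1)) (psum (fun k => dirichlet_kernel k t) (S n)))).
  { intros t _. rewrite fejer_kernel_avg. unfold scal; simpl; unfold mult; simpl. unfold Rdiv. ring. }
  replace PI with (scal (/ (INR n + 1)) (psum (fun _ => PI) (S n))) at 3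
    by (rewrite psum_const, S_INR; unfold scal; simpl; unfold mult; simpl; field; lra).
  apply (@is_RInt_scal R_NormedModule). apply is_RInt_psum. intros k. apply is_RInt_dirichlet_kernel.
Qed.

Lemma fejer_kernel_ge0 n t : 0 <= fejer_kernel n t.
Proof.
  unfold fejer_kernel. pose proof (pos_INR n).
  destruct (Req_EM_T _ _); [lra|].
  apply Rmult_le_pos; [apply Rdiv_le_0_compat; lra|apply pow2_ge_0].
Qed.

Lemma sin_sq_half_mul_fejer_kernel_le n t :
  sin (t / 2) ^ 2 * fejer_kernel n t <= / (2 * (INR n + 1)).
Proof.
  pose proof (pos_INR n). assert (0 < / (2 * (INR n + 1))) by (apply Rinv_0_lt_compat; lra).
  unfold fejer_kernel. destruct (Req_EM_T (sin (t / 2)) 0) as [Hs|Hs].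
  - rewrite Hs. lra.
  - replace (sin (t / 2) ^ 2 * (2 / (INR n + 1) * (sin ((INR n + 1) * t / 2) / (2 * sin (t / 2))) ^ 2))
      with (sin ((INR n + 1) * t / 2) ^ 2 * / (2 * (INR n + 1))) by (field; lra).
    pose proof (SIN_bound ((INR n + 1) * t / 2)).
    assert (sin ((INR n + 1) * t / 2) ^ 2 <= 1) by nra. nra.
Qed.

Record weight (lo hi W : R) (w : R -> R) : Prop := {
  weight_le : lo <= hi;
  weight_cont : forall t, continuous w t;
  weight_ge0 : forall t, 0 <= w t;
  weight_int : is_RInt w lo hi W;
  weight_mass_gt0 : 0 < W }.

Arguments weight_le {lo hi W w}.
Arguments weight_cont {lo hi W w}.
Arguments weight_ge0 {lo hi W w}.
Arguments weight_int {lo hi W w}.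
Arguments weight_mass_gt0 {lo hi W w}.

Definition wmean (lo hi W : R) (w h : R -> R) : R := / W * RInt (fun t => h t * w t) lo hi.

Section WeightedMean.

Context {lo hi W : R} {w : R -> R} (Hw : weight lo hi W w).

Lemma ex_RInt_wmul h : (forall t, continuous h t) -> ex_RInt (fun t => h t * w t) lo hi.
Proof.
  intros Hh. apply (@ex_RInt_continuous R_CompleteNormedModule). intros t _.
  apply (continuous_mult h w); [apply Hh|apply (weight_cont Hw)].
Qed.

Lemma wmean_const c : wmean lo hi W w (fun _ => c) = c.
Proof.
  unfold wmean. pose proof (weight_mass_gt0 Hw).
  rewrite (RInt_ext _ (fun t => scal c (w t))) by (intros; unfold scal; simpl; unfold mult; simpl; ring).
  rewrite (@RInt_scal R_CompleteNormedModule) by (exists W; apply (weight_int Hw)).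
  rewrite (is_RInt_unique _ _ _ _ (weight_int Hw)).
  unfold scal; simpl; unfold mult; simpl. field. lra.
Qed.

Lemma wmean_plus h1 h2 : (forall t, continuous h1 t) -> (forall t, continuous h2 t) ->
  wmean lo hi W w (fun t => h1 t + h2 t) = wmean lo hi W w h1 + wmean lo hi W w h2.
Proof.
  intros H1 H2. unfold wmean.
  rewrite (RInt_ext _ (fun t => plus (h1 t * w t) (h2 t * w t)))
    by (intros; unfold plus; simpl; ring).
  rewrite (@RInt_plus R_CompleteNormedModule) by (apply ex_RInt_wmul; assumption).
  unfold plus; simpl. ring.
Qed.

Lemma wmean_minus h1 h2 : (forall t, continuous h1 t) -> (forall t, continuous h2 t) ->
  wmean lo hi W w (fun t => h1 t - h2 t) = wmean lo hi W w h1 - wmean lo hi W w h2.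
Proof.
  intros H1 H2. unfold wmean.
  rewrite (RInt_ext _ (fun t => minus (h1 t * w t) (h2 t * w t)))
    by (intros; unfold minus, plus, opp; simpl; ring).
  rewrite (@RInt_minus R_CompleteNormedModule) by (apply ex_RInt_wmul; assumption).
  unfold minus, plus, opp; simpl. ring.
Qed.

Lemma wmean_scal c h : (forall t, continuous h t) ->
  wmean lo hi W w (fun t => c * h t) = c * wmean lo hi W w h.
Proof.
  intros Hh. unfold wmean.
  rewrite (RInt_ext _ (fun t => scal c (h t * w t)))
    by (intros; unfold scal; simpl; unfold mult; simpl; ring).
  rewrite (@RInt_scal R_CompleteNormedModule) by (apply ex_RInt_wmul; assumption).
  unfold scal; simpl; unfold mult; simpl. ring.
Qed.

Lemma wmean_psum (F : nat -> R -> R) n : (forall j t, continuous (F j) t) ->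
  wmean lo hi W w (fun t => psum (fun j => F j t) n) = psum (fun j => wmean lo hi W w (F j)) n.
Proof.
  intros HF. induction n as [|n IH].
  - exact (wmean_const 0).
  - change (fun t => psum (fun j => F j t) (S n))
      with (fun t => psum (fun j => F j t) n + F n t).
    rewrite psum_S, <- IH. apply wmean_plus; [|apply HF].
    intros t. apply continuous_psum. intros j. apply HF.
Qed.

Lemma wmean_le h1 h2 : (forall t, continuous h1 t) -> (forall t, continuous h2 t) ->
  (forall t, lo <= t <= hi -> h1 t <= h2 t) -> wmean lo hi W w h1 <= wmean lo hi W w h2.
Proof.
  intros H1 H2 H12. unfold wmean. pose proof (weight_mass_gt0 Hw).
  apply Rmult_le_compat_l; [left; apply Rinv_0_lt_compat; lra|].
  apply RInt_le.
  - apply (weight_le Hw).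
  - apply ex_RInt_wmul. exact H1.
  - apply ex_RInt_wmul. exact H2.
  - intros t Ht. apply Rmult_le_compat_r; [apply (weight_ge0 Hw)|]. apply H12. lra.
Qed.

Lemma wmean_le_const h M : (forall t, continuous h t) ->
  (forall t, lo <= t <= hi -> h t <= M) -> wmean lo hi W w h <= M.
Proof.
  intros Hh HM. rewrite <- (wmean_const M).
  apply wmean_le; [assumption|intros; apply continuous_const|assumption].
Qed.

Lemma wmean_abs_le h : (forall t, continuous h t) ->
  Rabs (wmean lo hi W w h) <= wmean lo hi W w (fun t => Rabs (h t)).
Proof.
  intros Hh. unfold wmean. pose proof (weight_mass_gt0 Hw).
  rewrite Rabs_mult, Rabs_pos_eq by (left; apply Rinv_0_lt_compat; lra).
  apply Rmult_le_compat_l; [left; apply Rinv_0_lt_compat; lra|].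
  rewrite (RInt_ext (fun t => Rabs (h t) * w t) (fun t => Rabs (h t * w t)))
    by (intros; rewrite Rabs_mult, (Rabs_pos_eq (w _)) by apply (weight_ge0 Hw); reflexivity).
  apply abs_RInt_le; [apply (weight_le Hw)|apply ex_RInt_wmul; assumption].
Qed.

Lemma wmean_convex_le phi h : (forall y, continuous phi y) ->
  (forall m, exists c, forall y, phi m + c * (y - m) <= phi y) ->
  (forall t, continuous h t) ->
  phi (wmean lo hi W w h) <= wmean lo hi W w (fun t => phi (h t)).
Proof.
  intros Hphi Hsub Hh. set (m := wmean lo hi W w h).
  destruct (Hsub m) as [c Hc].
  assert (Hcont : forall t, continuous (fun t => c * h t) t)
    by (intros t; apply (continuous_mult (fun _ => c) h); [apply continuous_const|apply Hh]).
  assert (Hline : wmean lo hi W w (fun t => (phi m - c * m) + c * h t) = phi m).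
  { rewrite (wmean_plus (fun _ => phi m - c * m) (fun t => c * h t)), wmean_const, wmean_scal
      by (try intros; auto using continuous_const). unfold m. ring. }
  rewrite <- Hline. apply wmean_le.
  - intros t. apply (continuous_plus (fun _ => phi m - c * m) (fun t => c * h t));
      [apply continuous_const|apply Hcont].
  - intros t. apply (continuous_comp h phi); [apply Hh|apply Hphi].
  - intros t _. specialize (Hc (h t)). lra.
Qed.

End WeightedMean.

Lemma fejer_weight n : weight (- PI) PI PI (fejer_kernel n).
Proof.
  pose proof PI_RGT_0. split; [lra|apply continuous_fejer_kernel|apply fejer_kernel_ge0|
                              apply is_RInt_fejer_kernel|lra].
Qed.

Lemma fejer_mean_wmean f n x :
  fejer_mean f n x = wmean (- PI) PI PI (fejer_kernel n) (fun t => f (x + t)).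
Proof. reflexivity. Qed.

Lemma fejer_mean_abs_le (f : R -> R) C n x : (forall y, continuous f y) -> (forall y, Rabs (f y) <= C) ->
  Rabs (fejer_mean f n x) <= C.
Proof.
  intros Hf HC. rewrite fejer_mean_wmean.
  eapply Rle_trans; [apply (wmean_abs_le (fejer_weight n)); intros t; apply continuous_translate, Hf|].
  apply (wmean_le_const (fejer_weight n)); [|intros; apply HC].
  intros t. apply continuous_Rabs_comp, continuous_translate, Hf.
Qed.

Lemma wmean_fejer_sin_sq_le n :
  wmean (- PI) PI PI (fejer_kernel n) (fun t => sin (t / 2) ^ 2) <= / (INR n + 1).
Proof.
  pose proof PI_RGT_0. pose proof (pos_INR n). unfold wmean.
  assert (Hcont : forall t, continuous (fun t => sin (t / 2) ^ 2 * fejer_kernel n t) t).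
  { intros t. apply (continuous_mult (fun t => sin (t / 2) ^ 2)); [|apply continuous_fejer_kernel].
    apply (@ex_derive_continuous R_AbsRing R_NormedModule). auto_derive. exact I. }
  apply Rle_trans with (/ PI * RInt (fun _ => / (2 * (INR n + 1))) (- PI) PI).
  - apply Rmult_le_compat_l; [left; apply Rinv_0_lt_compat; lra|].
    apply RInt_le; [lra| |apply ex_RInt_const|].
    + apply (@ex_RInt_continuous R_CompleteNormedModule). intros; apply Hcont.
    + intros t _. apply sin_sq_half_mul_fejer_kernel_le.
  - rewrite RInt_const. unfold scal; simpl; unfold mult; simpl. right. field. lra.
Qed.

Lemma sin_sq_half_le d t : 0 < d -> d <= Rabs t <= PI -> sin (d / 2) ^ 2 <= sin (t / 2) ^ 2.
Proof.
  intros Hd Ht. pose proof PI_RGT_0.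
  assert (Habs : sin (t / 2) ^ 2 = sin (Rabs t / 2) ^ 2).
  { destruct (Rle_dec 0 t); [rewrite Rabs_pos_eq by lra; reflexivity|].
    rewrite Rabs_left by lra. replace (- t / 2) with (- (t / 2)) by field.
    rewrite sin_neg. ring. }
  rewrite Habs. apply pow_incr. split.
  - apply sin_ge_0; lra.
  - apply sin_incr_1; lra.
Qed.

Lemma abs_sub_le_sin_sq_half (phi : R -> R) eta : (forall t, continuous phi t) -> 0 < eta ->
  exists c, 0 <= c /\ forall t, - PI <= t <= PI -> Rabs (phi t - phi 0) <= eta + c * sin (t / 2) ^ 2.
Proof.
  intros Hphi Heta. pose proof PI_RGT_0.
  assert (Hnear : exists d, 0 < d <= PI /\ forall t, Rabs t < d -> Rabs (phi t - phi 0) <= eta).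
  { destruct (proj2 (continuity_pt_filterlim phi 0) (Hphi 0) eta Heta) as [d0 [Hd0 Hnear]].
    exists (Rmin d0 PI). split; [split; [apply Rmin_pos|apply Rmin_r]; lra|].
    intros t Ht. destruct (Req_dec t 0) as [->|Ht0]; [rewrite Rminus_diag, Rabs_R0; lra|].
    left. apply (Hnear t). split; [split; [exact I|lra]|].
    simpl. unfold R_dist. rewrite Rminus_0_r.
    apply Rlt_le_trans with (1 := Ht). apply Rmin_l. }
  destruct Hnear as [d [Hd Hnear]].
  destruct (continuity_ab_maj (fun t => Rabs (phi t - phi 0)) (- PI) PI) as [tM [HM _]]; [lra| |].
  { intros t _. apply continuity_pt_filterlim, (continuous_Rabs_comp (fun t => phi t - phi 0)).
    apply (continuous_minus phi (fun _ => phi 0)); [apply Hphi|apply continuous_const]. }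
  set (s2 := sin (d / 2) ^ 2).
  assert (Hs2 : 0 < s2) by (apply pow2_gt_0, Rgt_not_eq, sin_gt_0; lra).
  set (c := Rabs (phi tM - phi 0) / s2).
  assert (Hc : 0 <= c) by (apply Rdiv_le_0_compat; [apply Rabs_pos|lra]).
  exists c. split; [exact Hc|].
  intros t Ht. destruct (Rlt_le_dec (Rabs t) d) as [Htd|Htd].
  - pose proof (Hnear t Htd). pose proof (pow2_ge_0 (sin (t / 2))). nra.
  - assert (s2 <= sin (t / 2) ^ 2) by (apply sin_sq_half_le; [lra|split; [lra|apply Rabs_le; lra]]).
    assert (c * s2 = Rabs (phi tM - phi 0)) by (unfold c; field; lra).
    pose proof (HM t Ht). nra.
Qed.

Lemma fejer_mean_dev_le (f : R -> R) x eta : (forall y, continuous f y) -> 0 < eta ->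
  exists c, forall n, Rabs (fejer_mean f n x - f x) <= eta + c / (INR n + 1).
Proof.
  intros Hf Heta. set (phi := fun t => f (x + t)).
  assert (Hphi : forall t, continuous phi t) by (intros t; apply continuous_translate, Hf).
  assert (Hsin : forall t, continuous (fun t => sin (t / 2) ^ 2) t).
  { intros t. apply (@ex_derive_continuous R_AbsRing R_NormedModule). auto_derive. exact I. }
  assert (Hdev : forall t, continuous (fun t => phi t - phi 0) t).
  { intros t. apply (continuous_minus phi (fun _ => phi 0)); [apply Hphi|apply continuous_const]. }
  destruct (abs_sub_le_sin_sq_half phi eta Hphi Heta) as [c [Hc Hbound]].
  exists c. intros n.
  replace (fejer_mean f n x - f x) with (wmean (- PI) PI PI (fejer_kernel n) (fun t => phi t - phi 0))
    by (rewrite (wmean_minus (fejer_weight n)), (wmean_const (fejer_weight n)) by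
          (auto using continuous_const); unfold phi; rewrite Rplus_0_r; reflexivity).
  eapply Rle_trans; [apply (wmean_abs_le (fejer_weight n)), Hdev|].
  apply Rle_trans with (wmean (- PI) PI PI (fejer_kernel n) (fun t => eta + c * sin (t / 2) ^ 2)).
  - apply (wmean_le (fejer_weight n)); [| |exact Hbound].
    + intros t. apply continuous_Rabs_comp, Hdev.
    + intros t. apply (continuous_plus (fun _ => eta) (fun t => c * sin (t / 2) ^ 2));
        [apply continuous_const|apply (continuous_mult (fun _ => c)); [apply continuous_const|apply Hsin]].
  - rewrite (wmean_plus (fejer_weight n) (fun _ => eta) (fun t => c * sin (t / 2) ^ 2)).
    + rewrite (wmean_const (fejer_weight n)), (wmean_scal (fejer_weight n)) by apply Hsin.
      pose proof (wmean_fejer_sin_sq_le n). unfold Rdiv. apply Rplus_le_compat_l.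
      apply Rmult_le_compat_l; assumption.
    + intros; apply continuous_const.
    + intros t. apply (continuous_mult (fun _ => c)); [apply continuous_const|apply Hsin].
Qed.

Lemma is_lim_seq_of_dev_le (u : nat -> R) l :
  (forall eta, 0 < eta -> exists c, forall n, Rabs (u n - l) <= eta + c / (INR n + 1)) ->
  is_lim_seq u l.
Proof.
  intros Hdev. apply is_lim_seq_Reals. intros eps Heps.
  destruct (Hdev (eps / 2) ltac:(lra)) as [c Hc].
  destruct (INR_unbounded (2 * Rabs c / eps)) as [N HN].
  exists N. intros n Hn. unfold R_dist.
  assert (HNn : INR N <= INR n) by (apply le_INR; lia).
  assert (Hc2 : 2 * Rabs c < eps * (INR n + 1)).
  { assert (2 * Rabs c / eps * eps = 2 * Rabs c) by (field; lra). nra. }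
  assert (c / (INR n + 1) < eps / 2).
  { pose proof (pos_INR n). apply Rlt_div_l; [lra|]. pose proof (Rle_abs c). lra. }
  pose proof (Hc n). lra.
Qed.

Theorem fejer_mean_cvg (f : R -> R) x : (forall y, continuous f y) ->
  is_lim_seq (fun n => fejer_mean f n x) (f x).
Proof.
  intros Hf. apply is_lim_seq_of_dev_le. intros eta Heta. apply fejer_mean_dev_le; assumption.
Qed.

Definition pvar_psum (p : R) (g : R -> R) (n : nat) (s t : nat -> R) : R :=
  psum (fun j => powr (Rabs (g (t j) - g (s j))) p) n.

Lemma pvar_psum_ge0 p g n s t : 0 <= pvar_psum p g n s t.
Proof. apply psum_ge0. intros; apply powr_ge0. Qed.

Lemma pvar_sum_le_iff p g n s t c : 0 < p -> 0 <= c ->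
  pvar_sum p g n s t <= c <-> pvar_psum p g n s t <= powr c p.
Proof. intros Hp Hc. apply powr_inv_le_iff; [apply pvar_psum_ge0|assumption..]. Qed.

Lemma pvar_psum_fejer_mean_le p (f : R -> R) n s t m B : 1 <= p -> (forall y, continuous f y) ->
  (forall tau, - PI <= tau <= PI -> pvar_psum p (fun y => f (y + tau)) n s t <= B) ->
  pvar_psum p (fejer_mean f m) n s t <= B.
Proof.
  intros Hp Hf HB. set (g := fun j tau => f (t j + tau) - f (s j + tau)).
  assert (Hg : forall j tau, continuous (g j) tau).
  { intros j tau. apply (continuous_minus (fun tau => f (t j + tau)) (fun tau => f (s j + tau)));
      apply continuous_translate, Hf. }
  assert (Hgp : forall j tau, continuous (fun tau => powr (Rabs (g j tau)) p) tau).
  { intros j tau. apply (continuous_comp (g j) (fun y => powr (Rabs y) p)); [apply Hg|].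
    apply continuous_powr_abs. lra. }
  apply Rle_trans with
    (psum (fun j => wmean (- PI) PI PI (fejer_kernel m) (fun tau => powr (Rabs (g j tau)) p)) n).
  - apply psum_le. intros j _. rewrite !fejer_mean_wmean, <- (wmean_minus (fejer_weight m));
      [|intros tau; apply continuous_translate, Hf..].
    apply (wmean_convex_le (fejer_weight m) (fun y => powr (Rabs y) p) (g j)); [| |apply Hg].
    + intros y. apply continuous_powr_abs. lra.
    + intros y. apply powr_abs_subgradient. exact Hp.
  - rewrite <- (wmean_psum (fejer_weight m) (fun j tau => powr (Rabs (g j tau)) p)) by apply Hgp.
    apply (wmean_le_const (fejer_weight m)); [|exact HB].
    intros tau. apply continuous_psum. intros j. apply Hgp.
Qed.

Lemma nonoverlapping_family_shift a n s t tau : nonoverlapping_family a n s t ->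
  nonoverlapping_family (a + tau) n (fun j => s j + tau) (fun j => t j + tau).
Proof.
  intros [Hin Hdis]. split.
  - intros j Hj. destruct (Hin j Hj). lra.
  - intros i j Hi Hj Hij. destruct (Hdis i j Hi Hj Hij); lra.
Qed.

(* A family in [b, b + 2 PI] is cut at a + 2 PI; by periodicity both pieces become
   families in [a, a + 2 PI], and at most one interval is actually cut. *)
Lemma pvar_psum_window_le p (f : R -> R) a b n s t B : 0 <= p -> periodic2pi f ->
  (forall s t, nonoverlapping_family a n s t -> pvar_psum p f n s t <= B) ->
  a <= b <= a + 2 * PI -> nonoverlapping_family b n s t ->
  pvar_psum p f n s t <= powr 2 p * (B + B).
Proof.
  intros Hp Hper HB Hb [Hin Hdis]. set (P := a + 2 * PI). pose proof PI_RGT_0.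
  set (sA := fun j => if Rle_dec (t j) P then s j else if Rle_dec P (s j) then s j - 2 * PI else s j).
  set (tA := fun j => if Rle_dec (t j) P then t j else if Rle_dec P (s j) then t j - 2 * PI else P).
  set (sB := fun j : nat => a).
  set (tB := fun j => if Rle_dec (t j) P then a else if Rle_dec P (s j) then a else t j - 2 * PI).
  assert (Hfams : nonoverlapping_family a n sA tA /\ nonoverlapping_family a n sB tB).
  { unfold sA, tA, sB, tB, P. split; split.
    all: first [intros j Hj; destruct (Hin j Hj)
               |intros i j Hi Hj Hij; destruct (Hin i Hi), (Hin j Hj), (Hdis i j Hi Hj Hij)].
    all: repeat match goal with |- context [Rle_dec ?x ?y] => destruct (Rle_dec x y) end; lra. }
  assert (Hsplit : forall j, f (t j) - f (s j) = (f (tA j) - f (sA j)) + (f (tB j) - f (sB j))).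
  { intros j. unfold sA, tA, sB, tB.
    destruct (Rle_dec (t j) P); [ring|].
    destruct (Rle_dec P (s j)); [rewrite !(periodic2pi_sub f _ Hper); ring|].
    rewrite (periodic2pi_sub f _ Hper). unfold P. rewrite Hper. ring. }
  apply Rle_trans with (psum (fun j => powr 2 p *
    (powr (Rabs (f (tA j) - f (sA j))) p + powr (Rabs (f (tB j) - f (sB j))) p)) n).
  - apply psum_le. intros j _. rewrite Hsplit. apply powr_abs_add_le. exact Hp.
  - rewrite psum_scal, psum_plus. apply Rmult_le_compat_l; [apply powr_ge0|].
    apply Rplus_le_compat; [apply (HB sA tA)|apply (HB sB tB)]; apply Hfams.
Qed.

Lemma pvar_psum_translate_le p (f : R -> R) a n s t tau B : 0 <= p -> periodic2pi f ->
  (forall s t, nonoverlapping_family a n s t -> pvar_psum p f n s t <= B) ->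
  nonoverlapping_family a n s t -> - (2 * PI) <= tau <= 2 * PI ->
  pvar_psum p (fun y => f (y + tau)) n s t <= powr 2 p * (B + B).
Proof.
  intros Hp Hper HB Hfam Htau. destruct (Rle_dec 0 tau) as [Hpos|Hneg].
  - apply (pvar_psum_window_le p f a (a + tau)); [assumption..|lra|].
    apply nonoverlapping_family_shift. exact Hfam.
  - replace (pvar_psum p (fun y => f (y + tau)) n s t)
      with (pvar_psum p f n (fun j => s j + (tau + 2 * PI)) (fun j => t j + (tau + 2 * PI))).
    + apply (pvar_psum_window_le p f a (a + (tau + 2 * PI))); [assumption..|lra|].
      apply nonoverlapping_family_shift. exact Hfam.
    + apply psum_ext. intros j _. rewrite <- !(Rplus_assoc _ tau), !Hper.
      reflexivity.
Qed.

Lemma Vp_bounded_by_fejer_mean p nu a (f : R -> R) C m : 1 <= p ->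
  (forall k, (1 <= k)%nat -> 0 < nu k) -> (forall y, continuous f y) -> periodic2pi f ->
  Vp_bounded_by p nu a f C -> Vp_bounded_by p nu a (fejer_mean f m) (4 * C).
Proof.
  intros Hp Hnu Hf Hper [Hvar Hsup]. pose proof PI_RGT_0.
  assert (HC : 0 <= C) by (eapply Rle_trans; [apply Rabs_pos|apply (Hsup a); lra]).
  split.
  - intros n s t Hn Hfam. pose proof (Hnu n Hn).
    assert (HX : 0 <= C * nu n) by nra.
    replace (4 * C * nu n) with (4 * (C * nu n)) by ring.
    apply pvar_sum_le_iff; [lra|lra|].
    eapply Rle_trans; [|apply powr_two_mul_le; assumption].
    apply pvar_psum_fejer_mean_le; [assumption..|].
    intros tau Htau. apply (pvar_psum_translate_le p f a); [lra|assumption| |assumption|lra].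
    intros s' t' Hfam'. apply pvar_sum_le_iff; [lra|assumption|]. apply Hvar; assumption.
  - intros x _. apply Rle_trans with C; [|lra].
    apply fejer_mean_abs_le; [exact Hf|]. apply (periodic2pi_abs_le f a C Hper Hsup).
Qed.

Lemma Vp_bounded_by_lim p nu a (G : nat -> R -> R) (g : R -> R) C : 0 < p ->
  (forall x, is_lim_seq (fun m => G m x) (g x)) ->
  (forall m, Vp_bounded_by p nu a (G m) C) -> Vp_bounded_by p nu a g C.
Proof.
  intros Hp Hlim HG. split.
  - intros n s t Hn Hfam.
    assert (HCnu : 0 <= C * nu n).
    { eapply Rle_trans; [apply powr_ge0|apply (proj1 (HG O) n s t Hn Hfam)]. }
    apply pvar_sum_le_iff; [assumption..|].
    assert (Hcvg : is_lim_seq (fun m => pvar_psum p (G m) n s t) (pvar_psum p g n s t)).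
    { apply (is_lim_seq_psum (fun m j => powr (Rabs (G m (t j) - G m (s j))) p)). intros j.
      apply (is_lim_seq_continuous (fun y => powr (Rabs y) p)).
      - apply continuity_pt_filterlim, continuous_powr_abs. exact Hp.
      - apply is_lim_seq_minus'; apply Hlim. }
    apply (is_lim_seq_le _ _ _ _ (fun m => proj1 (pvar_sum_le_iff p (G m) n s t _ Hp HCnu)
            (proj1 (HG m) n s t Hn Hfam)) Hcvg (is_lim_seq_const _)).
  - intros x Hx.
    apply (is_lim_seq_le _ _ _ _ (fun m => proj2 (HG m) x Hx)
            (is_lim_seq_abs _ _ (Hlim x)) (is_lim_seq_const _)).
Qed.

Theorem proposition3p4 (p : R) (nu : nat -> R) (f : R -> R) (a : R) :
  1 <= p ->
  modulus_of_variation nu ->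
  is_lim_seq nu p_infty ->
  (forall k, (1 <= k)%nat -> nu (S k) / powr (INR (S k)) (/ p) <= nu k / powr (INR k) (/ p)) ->
  is_lim_seq (fun k => nu k / powr (INR k) (/ p)) 0 ->
  (forall x, continuous f x) ->
  periodic2pi f ->
  (in_Vp p nu a f <-> bounded_in_Vp p nu a (fejer_mean f)).
Proof.
  intros Hp [Hnu _] _ _ _ Hf Hper. split.
  - intros [C HC]. exists (4 * C). intros m.
    apply Vp_bounded_by_fejer_mean; assumption.
  - intros [C HC]. exists C.
    apply (Vp_bounded_by_lim p nu a (fejer_mean f)); [lra| |exact HC].
    intros x. apply fejer_mean_cvg. exact Hf.
Qed.
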